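(* Fix $n\ge1$ and an integer $q$ with $1\le q\le n$. Let $S=S_{u,b}$ where $(u,b)$ is drawn uniformly from $(\{0,1\}^n\setminus\{0^n\})\times\{0,1\}$. Any classical (possibly randomized) algorithm that is given $q$ samples drawn uniformly from $S$ and outputs some $y\in\{0,1\}^n$ satisfies \[ \Pr[y\in\bar S]\le \frac12+\frac{1}{2\left(2^{\,n-q+1}-1\right)}, \] where the probability is over the choice of $S$, the samples and the internal randomness of the algorithm. In particular, for every such algorithm there is some $S\in\mathcal{F}_{\mathrm{BV}}$ on which its success probability is at most this bound.
   Context: For $u\in\{0,1\}^n\setminus\{0^n\}$ and $b\in\{0,1\}$, $S_{u,b}=\{x\in\{0,1\}^n : u\cdot x\equiv b\pmod 2\}$, $\mathcal{F}_{\mathrm{BV}}$ is the family of all such sets, and $\bar S=\{0,1\}^n\setminus S$. Success means outputting an element of the complement $\bar S$. *)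

From HB Require Import structures.
From mathcomp Require Import all_boot all_order all_algebra.
Set Implicit Arguments. Unset Strict Implicit. Unset Printing Implicit Defensive.
Import Order.TTheory GRing.Theory Num.Theory.

Definition bvec (n : nat) := {ffun 'I_n -> bool}.

Definition zero_bvec (n : nat) : bvec n := [ffun => false].

Definition dotp (n : nat) (u x : bvec n) : bool :=
  \big[addb/false]_(i < n) (u i && x i).

Definition BVset (n : nat) (u : bvec n) (b : bool) : {set bvec n} :=
  [set x | dotp u x == b].

Definition samples (n q : nat) := {ffun 'I_q -> bvec n}.

Local Open Scope ring_scope.

(* A randomized algorithm: for each q-tuple of samples, a probability
   distribution over outputs y in {0,1}^n. *)
Definition is_rand_alg (R : realFieldType) (n q : nat)
    (A : samples n q -> bvec n -> R) : Prop :=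
  forall s, (forall y, 0 <= A s y) /\ \sum_y A s y = 1.

(* Probability that A outputs an element of the complement of S, when given
   q i.i.d. uniform samples from S. *)
Definition succ_on (R : realFieldType) (n q : nat)
    (A : samples n q -> bvec n -> R) (S : {set bvec n}) : R :=
  \sum_(s : samples n q | [forall i, s i \in S])
     ((#|S|%:R ^+ q)^-1 * \sum_(y in ~: S) A s y).

Definition succ_avg (R : realFieldType) (n q : nat)
    (A : samples n q -> bvec n -> R) : R :=
  ((((2 ^ n - 1) * 2)%N)%:R)^-1 *
  \sum_(u : bvec n | u != zero_bvec n) \sum_(b : bool) succ_on A (BVset u b).

Definition bv_bound (R : realFieldType) (n q : nat) : R :=
  2^-1 + ((2 * ((2 ^ (n - q + 1) - 1)%N)%:R) : R)^-1.

From HB Require Import structures.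
From mathcomp Require Import all_boot all_order all_algebra.
From mathcomp Require Import zify.
Import Order.TTheory GRing.Theory Num.Theory.
Set Implicit Arguments. Unset Strict Implicit. Unset Printing Implicit Defensive.

(* For a tuple s of samples, the pairs (u, b) consistent with s (the trivial
   pair (0, 0) included) form a linear subspace V_s of {0,1}^n x {0,1}, and an
   output y misses S_{u,b} for (u, b) in V_s exactly when u . y <> b: this
   happens on at most half of V_s, whatever y is.  Double counting gives
   sum_s |V_s| = sum_(u,b) |S_{u,b}|^q = (2 (2^n - 1) + 2^q) 2^((n-1) q), the
   term 2^q 2^((n-1) q) = 2^(n q) coming from the trivial pair.  Normalising,
   the success probability averaged over the 2 (2^n - 1) sets is at most
   1/2 + 2^q / (4 (2^n - 1)), which is below the bound as soon as q >= 1; some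
   set does no better than the average. *)

Lemma sum_card_forall_in (I T P : finType) (F : P -> {set T}) :
  \sum_(s : {ffun I -> T}) #|[set p | [forall i, s i \in F p]]| =
  \sum_p #|F p| ^ #|I|.
Proof.
transitivity (\sum_(s : {ffun I -> T}) \sum_p ([forall i, s i \in F p] : nat)).
  by apply: eq_bigr => s _; rewrite -sum1_card big_mkcond; apply: eq_bigr => p _; rewrite inE.
rewrite exchange_big /=; apply: eq_bigr => p _.
rewrite -card_ffun_on -sum1_card [RHS]big_mkcond; apply: eq_bigr => s _.
by congr nat_of_bool; apply/forallP/ffun_onP.
Qed.

Section BitVectors.

Variable n : nat.
Implicit Types (u v x : bvec n) (b : bool).

Definition bvadd u v : bvec n := [ffun i => u i (+) v i].

Lemma bvaddK v : involutive (bvadd^~ v).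
Proof. by move=> u; apply/ffunP => i; rewrite !ffunE addbK. Qed.

Lemma dotp_addl u v x : dotp (bvadd u v) x = dotp u x (+) dotp v x.
Proof.
rewrite /dotp -big_split /=; apply: eq_bigr => i _; rewrite ffunE.
by case: (u i); case: (v i); case: (x i).
Qed.

Lemma dotp_addr u x v : dotp u (bvadd x v) = dotp u x (+) dotp u v.
Proof.
rewrite /dotp -big_split /=; apply: eq_bigr => i _; rewrite ffunE.
by case: (u i); case: (v i); case: (x i).
Qed.

Lemma dot0p x : dotp (zero_bvec n) x = false.
Proof. by rewrite /dotp big1 // => i _; rewrite ffunE. Qed.

Lemma BVset0 b : BVset (zero_bvec n) b = if b then set0 else setT.
Proof. by apply/setP => x; case: b; rewrite !inE dot0p. Qed.

Lemma BVsetC u b : ~: BVset u b = BVset u (~~ b).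
Proof. by apply/setP => x; rewrite !inE; case: (dotp u x); case: b. Qed.

Lemma card_bvec : #|bvec n| = 2 ^ n.
Proof. by rewrite card_ffun card_bool card_ord. Qed.

(* Translating by a vector e with u . e = 1 swaps S_{u,b} and S_{u,~~b}. *)
Lemma card_BVsetN u b : u != zero_bvec n -> #|BVset u (~~ b)| = #|BVset u b|.
Proof.
move=> u_neq0; have [i ui] : exists i, u i.
  apply/existsP; apply: contraR u_neq0 => /existsPn u0.
  by apply/eqP/ffunP => i; rewrite ffunE; apply/negbTE/u0.
pose e : bvec n := [ffun j => j == i].
have ue : dotp u e.
  rewrite /dotp (bigD1 i) //= big1 => [|j /negbTE ji]; last by rewrite ffunE ji andbF.
  by rewrite ffunE eqxx ui.
have -> : BVset u (~~ b) = (bvadd^~ e) @^-1: BVset u b.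
  by apply/setP => x; rewrite !inE dotp_addr ue; case: (dotp u x); case: b.
exact/card_preimset/inv_inj/bvaddK.
Qed.

Lemma card_BVset u b : u != zero_bvec n -> #|BVset u b| = 2 ^ n.-1.
Proof.
move=> u_neq0; have n_gt0 : 0 < n.
  by case: n u u_neq0 => // u; case/negP; apply/eqP/ffunP => -[].
have := cardsC (BVset u b); rewrite BVsetC card_BVsetN // card_bvec addnn.
by rewrite -[in 2 ^ n](prednK n_gt0) expnS mul2n => /double_inj.
Qed.

Lemma card_nonzero_pairs :
  #|[pred p : bvec n * bool | p.1 != zero_bvec n]| = (2 ^ n - 1) * 2.
Proof.
have -> : #|[pred p : bvec n * bool | p.1 != zero_bvec n]| =
          #|setX [set~ zero_bvec n] [set: bool]|.
  by apply: eq_card => p; rewrite !inE andbT.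
by rewrite cardsX cardsC1 cardsT card_bool card_bvec subn1.
Qed.

End BitVectors.

Section Consistency.

Variables n q : nat.
Implicit Types (s : samples n q) (y : bvec n).

Definition consistent s : {set bvec n * bool} :=
  [set p | [forall i, s i \in BVset p.1 p.2]].

Definition refuting s y : {set bvec n * bool} :=
  [set p in consistent s | y \notin BVset p.1 p.2].

Definition pair_add (p r : bvec n * bool) := (bvadd p.1 r.1, p.2 (+) r.2).

Lemma pair_addK r : involutive (pair_add^~ r).
Proof. by move=> [u b]; rewrite /pair_add /= bvaddK addbK. Qed.

(* The consistent pairs form a linear space, and the refuting ones are those
   where the linear form (u, b) |-> u . y + b takes the value 1: translating by
   one refuting pair maps them injectively to non-refuting consistent pairs. *)
Lemma card_refuting s y : #|refuting s y| * 2 <= #|consistent s|.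
Proof.
have sub_refuting : refuting s y \subset consistent s.
  by apply/subsetP => p; rewrite inE => /andP[].
rewrite -[#|consistent s|](cardsID (refuting s y)) (setIidPr sub_refuting).
rewrite muln2 -addnn leq_add2l.
have [->|[r r_ref]] := set_0Vmem (refuting s y); first by rewrite cards0.
rewrite -(card_imset _ (inv_inj (pair_addK r))); apply/subset_leq_card/subsetP.
move=> _ /imsetP[p p_ref ->]; move: r_ref p_ref; rewrite !inE.
case/andP=> /forallP r_con r_y /andP[/forallP p_con p_y].
have pr_con : [forall i, s i \in BVset (pair_add p r).1 (pair_add p r).2].
  apply/forallP => i; move: (r_con i) (p_con i); rewrite !inE dotp_addl.
  by move=> /eqP-> /eqP->.
rewrite pr_con /= negbK dotp_addl.
by move: r_y p_y; case: (dotp _ y); case: (dotp _ y); case: r.2; case: p.2.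
Qed.

Lemma sum_card_consistent : 0 < n -> 0 < q ->
  \sum_s #|consistent s| = ((2 ^ n - 1) * 2 + 2 ^ q) * (2 ^ n.-1) ^ q.
Proof.
move=> n_gt0 q_gt0.
rewrite sum_card_forall_in card_ord -(pair_bigA _ (fun u b => #|BVset u b| ^ q)) /=.
rewrite (bigD1 (zero_bvec n)) //= big_bool !BVset0 cards0 cardsT card_bvec exp0n //.
rewrite /= add0n mulnDl addnC -expnMn -expnS (prednK n_gt0); congr (_ + _).
rewrite (eq_bigr (fun=> 2 * (2 ^ n.-1) ^ q)) => [|u u_neq0]; last first.
  by rewrite big_bool /= !card_BVset // addnn -mul2n.
by rewrite sum_nat_cond_const cardsE cardC1 card_bvec -subn1 mulnA (mulnC _ 2).
Qed.

End Consistency.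

Local Open Scope ring_scope.

Lemma exists_le_mean (R : realDomainType) (I : finType) (P : pred I) (f : I -> R) B :
  (0 < #|P|)%N -> \sum_(i | P i) f i <= #|P|%:R * B -> exists2 i, P i & f i <= B.
Proof.
move=> P_gt0 sum_le; case: (pickP [pred i | P i && (f i <= B)]) => [i /andP[]|none].
  by exists i.
have [i Pi] := card_gt0P P_gt0.
suff : #|P|%:R * B < \sum_(i | P i) f i by rewrite ltNge sum_le.
rewrite mulr_natl -sumr_const; apply: ltr_sum => [|j Pj].
  by apply/hasP; exists i; rewrite ?mem_index_enum.
by move: (none j); rewrite /= [P j]Pj /= => /negbT; rewrite -ltNge.
Qed.

Lemma avg_le_bv_bound (R : realFieldType) (n q : nat) : (0 < q)%N -> (q <= n)%N ->
  ((2 ^ n - 1) * 2)%:R^-1 * (((2 ^ n - 1) * 2 + 2 ^ q)%N%:R / 2) <= bv_bound R n q.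
Proof.
move=> q_gt0 le_qn.
set C := ((2 ^ n - 1) * 2)%N; set K := (2 ^ q)%N; set D := (2 ^ (n - q + 1) - 1)%N.
have D_gt0 : (0 < D)%N by rewrite subn_gt0 -[1%N]/(2 ^ 0)%N ltn_exp2l ?addn1.
have K_ge2 : (2 <= K)%N by rewrite -[2%N]/(2 ^ 1)%N leq_exp2l.
(* 2^q (2^(n-q+1) - 1) = 2^(n+1) - 2^q <= 2^(n+1) - 2 *)
have KD_le : (K * D <= C)%N.
  have : (K * 2 ^ (n - q + 1) = 2 ^ n * 2)%N.
    by rewrite /K -expnD -expnSr; congr (2 ^ _)%N; lia.
  by rewrite /C /D mulnBr muln1 => ->; rewrite mulnBl mul1n leq_sub2l.
have C_gt0 : (0 < C)%N by move: KD_le; rewrite /D; nia.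
rewrite /bv_bound -/D natrD mulrDl mulrDr mulrA mulVf ?pnatr_eq0 -?lt0n // mul1r lerD2l.
rewrite invfM mulrA [leRHS]mulrC ler_pM2r ?invr_gt0 ?ltr0n //.
by rewrite ler_pdivrMl ?ltr0n // ler_pdivlMr ?ltr0n // -natrM ler_nat.
Qed.

Section Algorithm.

Variables (R : realFieldType) (n q : nat) (A : samples n q -> bvec n -> R).
Hypothesis A_rand : is_rand_alg A.

Lemma succ_on_refuting (p : bvec n * bool) : p.1 != zero_bvec n ->
  succ_on A (BVset p.1 p.2) =
  ((2 ^ n.-1) ^ q)%:R^-1 * \sum_s \sum_y A s y * (p \in refuting s y)%:R.
Proof.
case: p => u b /= u_neq0; rewrite /succ_on card_BVset // -natrX mulr_sumr big_mkcond /=.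
apply: eq_bigr => s _; rewrite /refuting /consistent.
case: ifP => s_con; last by rewrite big1 ?mulr0 // => y _; rewrite !inE s_con mulr0.
congr (_ * _); rewrite big_mkcond; apply: eq_bigr => y _.
by rewrite !inE s_con /=; case: (dotp u y != b); rewrite ?mulr1 ?mulr0.
Qed.

Lemma expected_refuting_le s :
  \sum_y A s y * #|refuting s y|%:R <= #|consistent s|%:R / 2.
Proof.
have [A_ge0 A_sum1] := A_rand s.
apply: (@le_trans _ _ (\sum_y A s y * (#|consistent s|%:R / 2))).
  apply: ler_sum => y _; rewrite ler_wpM2l // ler_pdivlMr //.
  by rewrite -natrM ler_nat card_refuting.
by rewrite -mulr_suml A_sum1 mul1r.
Qed.

Lemma sum_succ_on_le : (0 < n)%N -> (0 < q)%N ->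
  \sum_(p | p.1 != zero_bvec n) succ_on A (BVset p.1 p.2) <=
  ((2 ^ n - 1) * 2 + 2 ^ q)%N%:R / 2.
Proof.
move=> n_gt0 q_gt0.
have sum_indicator (X : {set bvec n * bool}) : \sum_p (p \in X)%:R = #|X|%:R :> R.
  by rewrite -sum1_card natr_sum [RHS]big_mkcond; apply: eq_bigr => p _; case: (p \in X).
rewrite (eq_bigr _ (fun p => succ_on_refuting (p:=p))) -mulr_sumr.
apply: (@le_trans _ _ (((2 ^ n.-1) ^ q)%:R^-1 * ((\sum_s #|consistent s|)%:R / 2))).
  rewrite ler_wpM2l ?invr_ge0 //.
  apply: (@le_trans _ _ (\sum_p \sum_s \sum_y A s y * (p \in refuting s y)%:R)).
    rewrite [leRHS](bigID (fun p => p.1 != zero_bvec n)) lerDl /=.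
    do 3 (apply: sumr_ge0 => ? _); apply: mulr_ge0 => //; exact: (A_rand _).1.
  rewrite exchange_big natr_sum mulr_suml; apply: ler_sum => s _.
  rewrite exchange_big /=; apply: le_trans (expected_refuting_le s).
  by under eq_bigr do rewrite -mulr_sumr sum_indicator.
by rewrite sum_card_consistent // natrM mulrAC mulrC mulfK // pnatr_eq0 !expn_eq0.
Qed.

Lemma succ_avgE : succ_avg A =
  ((2 ^ n - 1) * 2)%N%:R^-1 * \sum_(p | p.1 != zero_bvec n) succ_on A (BVset p.1 p.2).
Proof.
by rewrite /succ_avg pair_big_dep; congr (_ * _); apply: eq_bigl => p; rewrite andbT.
Qed.

Lemma succ_avg_le : (0 < n)%N -> (0 < q)%N -> (q <= n)%N -> succ_avg A <= bv_bound R n q.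
Proof.
move=> n_gt0 q_gt0 le_qn; rewrite succ_avgE; apply: le_trans (avg_le_bv_bound R q_gt0 le_qn).
by rewrite ler_wpM2l ?invr_ge0 ?sum_succ_on_le.
Qed.

End Algorithm.

Unset Implicit Arguments.

Theorem mainTheorem2 (R : realFieldType) (n q : nat)
    (A : samples n q -> bvec n -> R) :
  (1 <= n)%N -> (1 <= q)%N -> (q <= n)%N ->
  is_rand_alg A ->
  succ_avg A <= bv_bound R n q /\
  exists (u : bvec n) (b : bool),
    u != zero_bvec n /\ succ_on A (BVset u b) <= bv_bound R n q.
Proof.
move=> n_gt0 q_gt0 le_qn A_rand.
have avg_le := succ_avg_le A_rand n_gt0 q_gt0 le_qn.
have C_gt0 : (0 < (2 ^ n - 1) * 2)%N.
  by rewrite muln_gt0 subn_gt0 andbT -{1}(expn0 2) ltn_exp2l.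
split=> //.
have [[u b] /= u_neq0 succ_le] : exists2 p : bvec n * bool,
    p.1 != zero_bvec n & succ_on A (BVset p.1 p.2) <= bv_bound R n q.
  apply: exists_le_mean; first by rewrite card_nonzero_pairs.
  by move: avg_le; rewrite succ_avgE card_nonzero_pairs ler_pdivrMl ?ltr0n.
by exists u, b.
Qed.
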